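(* Let $B$ be the randomized response mechanism $B(y)=|h(y)-(1-V)|$ with $h:\mathbb Y\to\{0,1\}$, $V\sim\mathrm{Bern}(\theta)$, $\theta\in[0,1]$, and let $M=B\circ S$ with $S$ Poisson subsampling of rate $r$. Then for all $x\simeq_{K_+,K_-}x'$, $$\Psi_\alpha(m_x\|m_{x'})\le\max_{\tau\in\{\theta,1-\theta\}}\Psi_\alpha\big((1-w^{(1)})\mathrm{Bern}(\cdot\mid\theta)+w^{(1)}\mathrm{Bern}(\cdot\mid\tau)\ \big\|\ (1-w^{(2)})\mathrm{Bern}(\cdot\mid\theta)+w^{(2)}\mathrm{Bern}(\cdot\mid1-\tau)\big),$$ where $w^{(1)}=1-(1-r)^{K_-}$ and $w^{(2)}=1-(1-r)^{K_+}$.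
   Context: Finite set $\mathbb A$, datasets $x\subseteq\mathbb A$, batches are subsets $y\subseteq x$. Poisson subsampling with rate $r$: $s_x(y)=r^{|y|}(1-r)^{|x|-|y|}$ for $y\subseteq x$; $m_x(z)=\sum_y b_y(z)s_x(y)$ where $b_y$ is the pmf of $B(y)$ on $\{0,1\}$. $\mathrm{Bern}(\cdot\mid p)$ is the pmf on $\{0,1\}$ with mass $p$ at $1$. $x\simeq_{K_+,K_-}x'$ iff $x'=(x\setminus g_-)\cup g_+$ with $g_-\subseteq x$, $|g_-|=K_-$, $g_+\cap x=\emptyset$, $|g_+|=K_+$. For pmfs on $\{0,1\}$: $H_\alpha(p\|q)=\sum_z\max\{p(z)-\alpha q(z),0\}$ ($\alpha\ge0$), $\Lambda_\alpha(p\|q)=\sum_z p(z)^\alpha q(z)^{1-\alpha}$ ($\alpha>1$); $\Psi_\alpha$ is either. *)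

From HB Require Import structures.
From mathcomp Require Import all_boot all_order all_algebra.
From mathcomp Require Import reals constructive_ereal exp.
Set Implicit Arguments. Unset Strict Implicit. Unset Printing Implicit Defensive.
Import Order.TTheory GRing.Theory Num.Theory.
Local Open Scope ring_scope.

(* pmfs on {0,1} are functions bool -> R (true = 1, false = 0) *)

Definition Bern (R : realType) (p : R) : bool -> R :=
  fun z => if z then p else 1 - p.

(* pmf of the randomized response B(y) = |h(y) - (1 - V)|, V ~ Bern(theta):
   V = 1 gives h(y), V = 0 gives 1 - h(y). [hy] is h(y). *)
Definition rr_pmf (R : realType) (theta : R) (hy : bool) : bool -> R :=
  fun z => theta * (z == hy)%:R + (1 - theta) * (z == ~~ hy)%:R.

Definition poisson_sub (R : realType) (A : finType) (r : R) (x y : {set A}) : R :=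
  if y \subset x then r ^+ #|y| * (1 - r) ^+ (#|x| - #|y|) else 0.

Definition subsampled_pmf (R : realType) (A : finType) (h : {set A} -> bool)
    (theta r : R) (x : {set A}) : bool -> R :=
  fun z => \sum_(y : {set A}) rr_pmf theta (h y) z * poisson_sub r x y.

Definition neighbor (A : finType) (Kp Km : nat) (x x' : {set A}) : Prop :=
  exists gm gp : {set A},
    [/\ gm \subset x, #|gm| = Km, gp :&: x = set0, #|gp| = Kp &
        x' = (x :\: gm) :|: gp].

Definition Hdiv (R : realType) (alpha : R) (p q : bool -> R) : R :=
  \sum_(z : bool) Num.max (p z - alpha * q z) 0.

Definition Lterm (R : realType) (alpha : R) (pz qz : R) : \bar R :=
  if qz == 0 then (if pz == 0 then 0%E else +oo%E)
  else ((pz `^ alpha) * (qz `^ (1 - alpha)))%:E.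

Definition Ldiv (R : realType) (alpha : R) (p q : bool -> R) : \bar R :=
  (\sum_(z : bool) Lterm alpha (p z) (q z))%E.

Definition bmix (R : realType) (w a b : R) : bool -> R :=
  fun z => (1 - w) * Bern a z + w * Bern b z.

From HB Require Import structures.
From mathcomp Require Import all_boot all_order all_algebra.
From mathcomp Require Import reals constructive_ereal exp.
From mathcomp Require Import interval_inference convex hoelder.
From mathcomp Require classical_sets.
From mathcomp Require Import ring lra.
Import Order.TTheory GRing.Theory Num.Theory.
Set Implicit Arguments. Unset Strict Implicit. Unset Printing Implicit Defensive.
Local Open Scope ring_scope.

(* The output of M on a dataset x is one coin, Bern (rr_param theta s_x), where s_x is
   the probability that h vanishes on the Poisson batch of x and rr_param theta is affine.
   Write x = x0 :|: g- and x' = x0 :|: g+.  A batch of x avoids g- with probability 1 - w1,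
   and is then a batch of x0; hence s_x = (1 - w1) u + w1 a and s_x' = (1 - w2) u + w2 b
   with u = s_x0 and a, b in [0, 1].  The divergence between two coins is jointly convex in
   their parameters, so as a function of (u, a, b) it is maximal at a vertex of the cube.
   Invariance under (s, t) |-> (1 - s, 1 - t), constancy on the diagonal and one more
   convexity step reduce the eight vertices to (s, t) = (0, w2) and (w1, 0), the two
   terms of the bound. *)

Section integrands.
Variable R : realType.

Lemma powR_convex_comb (a l x y : R) : 1 <= a -> 0 <= l <= 1 -> 0 <= x -> 0 <= y ->
  (l * x + (1 - l) * y) `^ a <= l * x `^ a + (1 - l) * y `^ a.
Proof.
move=> a1 /andP[l0 l1] x0 y0.
have := @convex_powR R a a1 (Itv01 l0 l1) x y.
rewrite !classical_sets.in_setE /= !in_itv /= !andbT => /(_ x0 y0).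
by rewrite !convRE.
Qed.

(* The perspective q (p/q)^a of x ^ a; [Lterm] is its extension by +oo at (p, 0), p > 0. *)
Definition powR_persp (a p q : R) : R := q * (p / q) `^ a.

Lemma Lterm_persp (a p q : R) : 1 < a -> 0 <= p -> 0 <= q -> (q == 0 -> p == 0) ->
  Lterm a p q = (powR_persp a p q)%:E.
Proof.
move=> a1 p0 q0 qp; rewrite /Lterm /powR_persp.
have [qe|qn0] := eqVneq q 0; first by rewrite (eqP (qp (introT eqP qe))) qe eqxx mul0r.
congr (_%:E).
have qa : 0 < q `^ a by rewrite powR_gt0 // lt_neqAle eq_sym qn0.
have -> : q `^ (1 - a) = q / q `^ a by rewrite powRB ?powRr1 // implybE qn0 orbT.
have -> : p `^ a = (p / q) `^ a * q `^ a by rewrite -powRM ?divfK // divr_ge0.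
by field; rewrite gt_eqF.
Qed.

Lemma powR_persp_convex (a l p0 q0 p1 q1 : R) : 1 <= a -> 0 <= l <= 1 ->
  0 <= p0 -> 0 <= q0 -> 0 <= p1 -> 0 <= q1 ->
  (l * q0 = 0 -> l * p0 = 0) -> ((1 - l) * q1 = 0 -> (1 - l) * p1 = 0) ->
  powR_persp a (l * p0 + (1 - l) * p1) (l * q0 + (1 - l) * q1) <=
  l * powR_persp a p0 q0 + (1 - l) * powR_persp a p1 q1.
Proof.
move=> a1 /andP[l0 l1] p00 q00 p10 q10 hq0 hq1; rewrite /powR_persp.
have [e0|n0] := eqVneq (l * q0) 0.
  rewrite e0 (hq0 e0) !add0r mulrA e0 mul0r add0r.
  have [->|m0] := eqVneq (1 - l) 0; first by rewrite !mul0r.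
  by rewrite invfM mulrACA mulfV // mul1r mulrA.
have [e1|n1] := eqVneq ((1 - l) * q1) 0.
  rewrite e1 (hq1 e1) !addr0 [X in _ <= _ + X]mulrA e1 mul0r addr0.
  have [->|m0] := eqVneq l 0; first by rewrite !mul0r.
  by rewrite invfM mulrACA mulfV // mul1r mulrA.
have q0n : q0 != 0 by apply: contra n0 => /eqP ->; rewrite mulr0.
have q1n : q1 != 0 by apply: contra n1 => /eqP ->; rewrite mulr0.
set q := l * q0 + (1 - l) * q1.
have qp : 0 < q.
  by rewrite addr_gt0 // lt_neqAle eq_sym ?n0 ?n1 mulr_ge0 // subr_ge0.
(* the ratio at the mixture is a convex combination of the two ratios *)
set t := l * q0 / q.
have t01 : 0 <= t <= 1.
  rewrite divr_ge0 ?mulr_ge0 ?(ltW qp) //= ler_pdivrMr // mul1r lerDl.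
  by rewrite mulr_ge0 ?subr_ge0.
have -> : (l * p0 + (1 - l) * p1) / q = t * (p0 / q0) + (1 - t) * (p1 / q1).
  by rewrite /t /q; field; rewrite q0n q1n -/q gt_eqF.
apply: (le_trans (ler_wpM2l (ltW qp) (powR_convex_comb a1 t01 _ _))).
- by rewrite divr_ge0.
- by rewrite divr_ge0.
by rewrite le_eqVlt; apply/orP; left; apply/eqP; rewrite /t /q; field; rewrite -/q gt_eqF.
Qed.

Lemma Lterm_ge0 (a p q : R) : (0 <= Lterm a p q)%E.
Proof.
rewrite /Lterm; case: ifP => _; first by case: ifP.
by rewrite lee_fin mulr_ge0 // powR_ge0.
Qed.

Lemma Lterm_diag (a p : R) : 1 < a -> 0 <= p -> (Lterm a p p = p%:E * Lterm a 1 1)%E.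
Proof.
move=> a1 p0.
have Lpp (v : R) : 0 <= v -> Lterm a v v = v%:E.
  move=> v0; rewrite /Lterm; have [->|vn] := eqVneq v 0; first by [].
  rewrite -powRD; last by rewrite implybE vn orbT.
  by rewrite addrC subrK powRr1.
by rewrite !Lpp ?ler01 // mule1.
Qed.

Lemma Lterm_convex (a l p0 q0 p1 q1 : R) : 1 < a -> 0 <= l <= 1 ->
  0 <= p0 -> 0 <= q0 -> 0 <= p1 -> 0 <= q1 ->
  (Lterm a (l * p0 + (1 - l) * p1) (l * q0 + (1 - l) * q1) <=
   l%:E * Lterm a p0 q0 + (1 - l)%:E * Lterm a p1 q1)%E.
Proof.
move=> a1 l01 p00 q00 p10 q10; move: (l01) => /andP[l0 l1].
have [->|l0'] := eqVneq l 0.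
  by rewrite !mul0r !add0r subr0 !mul1r mul0e add0e mul1e.
have [->|l1'] := eqVneq l 1.
  by rewrite subrr !mul0r !addr0 !mul1r mul0e adde0 mul1e.
have lp : 0 < l by rewrite lt_neqAle eq_sym l0' l0.
have mp : 0 < 1 - l by rewrite subr_gt0 lt_neqAle l1' l1.
have [/andP[/eqP qe /negPf pn]|C0] := boolP ((q0 == 0) && (p0 != 0)).
  rewrite {2}/Lterm qe eqxx pn gt0_muley ?lte_fin //.
  by apply: lee_paddr; rewrite ?leey // mule_ge0 ?Lterm_ge0 // lee_fin ltW.
have [/andP[/eqP qe /negPf pn]|C1] := boolP ((q1 == 0) && (p1 != 0)).
  rewrite {3}/Lterm qe eqxx pn gt0_muley ?lte_fin //.
  by apply: lee_paddl; rewrite ?leey // mule_ge0 ?Lterm_ge0 // lee_fin ltW.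
have {}C0 : q0 == 0 -> p0 == 0 by move=> qe; move: C0; rewrite qe negbK.
have {}C1 : q1 == 0 -> p1 == 0 by move=> qe; move: C1; rewrite qe negbK.
have lq0 : 0 <= l * q0 by rewrite mulr_ge0.
have mq1 : 0 <= (1 - l) * q1 by rewrite mulr_ge0 // ltW.
rewrite (Lterm_persp a1 p00 q00 C0) (Lterm_persp a1 p10 q10 C1) Lterm_persp //.
- rewrite -!EFinM -EFinD lee_fin powR_persp_convex // ?ltW //.
    by move=> /eqP; rewrite mulf_eq0 (negPf l0') => /C0/eqP ->; rewrite mulr0.
  by move=> /eqP; rewrite mulf_eq0 (gt_eqF mp) => /C1/eqP ->; rewrite mulr0.
- by rewrite addr_ge0 // mulr_ge0 // ltW.
- by rewrite addr_ge0.
rewrite paddr_eq0 // !mulf_eq0 (negPf l0') (gt_eqF mp) /=.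
by move=> /andP[/C0/eqP -> /C1/eqP ->]; rewrite !mulr0 addr0.
Qed.

Definition Hterm (al p q : R) : \bar R := (Num.max (p - al * q) 0)%:E.

Lemma Hterm_ge0 (al p q : R) : (0 <= Hterm al p q)%E.
Proof. by rewrite lee_fin le_max lexx orbT. Qed.

Lemma Hterm_diag (al p : R) : 0 <= p -> (Hterm al p p = p%:E * Hterm al 1 1)%E.
Proof.
by move=> p0; rewrite /Hterm -EFinM mulr1 maxr_pMr // mulr0 mulrBr mulr1 mulrC.
Qed.

Lemma Hterm_convex (al l p0 q0 p1 q1 : R) : 0 <= l <= 1 ->
  (Hterm al (l * p0 + (1 - l) * p1) (l * q0 + (1 - l) * q1) <=
   l%:E * Hterm al p0 q0 + (1 - l)%:E * Hterm al p1 q1)%E.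
Proof.
move=> /andP[l0 l1]; rewrite /Hterm -!EFinM -EFinD lee_fin.
have m_ge (u v : R) : u - al * v <= Num.max (u - al * v) 0 by rewrite le_max lexx.
have m_ge0 (u v : R) : 0 <= Num.max (u - al * v) 0 by rewrite le_max lexx orbT.
rewrite ge_max addr_ge0 ?mulr_ge0 ?subr_ge0 // andbT.
have -> : l * p0 + (1 - l) * p1 - al * (l * q0 + (1 - l) * q1) =
  l * (p0 - al * q0) + (1 - l) * (p1 - al * q1) by ring.
by rewrite lerD // ler_wpM2l ?subr_ge0.
Qed.

End integrands.

Lemma convex_comb01 (R : realType) (c x y : R) :
  0 <= c <= 1 -> 0 <= x <= 1 -> 0 <= y <= 1 -> 0 <= c * x + (1 - c) * y <= 1.
Proof. by move=> /andP[? ?] /andP[? ?] /andP[? ?]; apply/andP; split; nra. Qed.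

Lemma onem01 (R : realType) (x : R) : 0 <= x <= 1 -> 0 <= 1 - x <= 1.
Proof. by move=> /andP[? ?]; apply/andP; split; lra. Qed.

Section quasiconvex_unit_square.
Variables (R : realType) (G : R -> R -> \bar R).

Definition quasiconvex01 := forall l s0 t0 s1 t1 : R, 0 <= l <= 1 ->
  0 <= s0 <= 1 -> 0 <= t0 <= 1 -> 0 <= s1 <= 1 -> 0 <= t1 <= 1 ->
  (G (l * s0 + (1 - l) * s1) (l * t0 + (1 - l) * t1) <= maxe (G s0 t0) (G s1 t1))%E.

Hypothesis G_qc : quasiconvex01.
Hypothesis G_flip : forall s t : R, G (1 - s) (1 - t) = G s t.
Hypothesis G_diag : forall s s' : R, 0 <= s <= 1 -> 0 <= s' <= 1 -> G s s = G s' s'.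

Lemma quasiconvex_le_comb (M : \bar R) (l s0 t0 s1 t1 s t : R) : 0 <= l <= 1 ->
  0 <= s0 <= 1 -> 0 <= t0 <= 1 -> 0 <= s1 <= 1 -> 0 <= t1 <= 1 ->
  s = l * s0 + (1 - l) * s1 -> t = l * t0 + (1 - l) * t1 ->
  (G s0 t0 <= M)%E -> (G s1 t1 <= M)%E -> (G s t <= M)%E.
Proof.
move=> l01 s0i t0i s1i t1i -> -> H0 H1.
by apply: le_trans (G_qc l01 s0i t0i s1i t1i) _; rewrite ge_max H0 H1.
Qed.

Lemma quasiconvex_cube_le (M : \bar R) (c1 c2 : R) : 0 <= c1 <= 1 -> 0 <= c2 <= 1 ->
  (forall a b : R, a = 0 \/ a = 1 -> b = 0 \/ b = 1 ->
     (G ((1 - c1) * a) ((1 - c2) * b) <= M)%E) ->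
  forall u a b : R, 0 <= u <= 1 -> 0 <= a <= 1 -> 0 <= b <= 1 ->
  (G (c1 * u + (1 - c1) * a) (c2 * u + (1 - c2) * b) <= M)%E.
Proof.
move=> c1i c2i low_vertex_le.
have bit01 (x : R) : x = 0 \/ x = 1 -> 0 <= x <= 1 by case=> ->; rewrite ?lexx ?ler01.
have i0 : 0 <= (0 : R) <= 1 by apply: bit01; left.
have i1 : 0 <= (1 : R) <= 1 by apply: bit01; right.
have bitC (x : R) : x = 0 \/ x = 1 -> 1 - x = 0 \/ 1 - x = 1.
  by case=> ->; rewrite ?subr0 ?subrr; [right | left].
have at_vertex u a b : u = 0 \/ u = 1 -> a = 0 \/ a = 1 -> b = 0 \/ b = 1 ->
    (G (c1 * u + (1 - c1) * a) (c2 * u + (1 - c2) * b) <= M)%E.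
  case=> -> ha hb; first by rewrite !mulr0 !add0r; exact: low_vertex_le.
  (* the vertices with u = 1 are the flips of those with u = 0 *)
  rewrite -G_flip.
  have -> : 1 - (c1 * 1 + (1 - c1) * a) = (1 - c1) * (1 - a) by ring.
  have -> : 1 - (c2 * 1 + (1 - c2) * b) = (1 - c2) * (1 - b) by ring.
  by apply: low_vertex_le; apply: bitC.
have on_edge u a b : u = 0 \/ u = 1 -> a = 0 \/ a = 1 -> 0 <= b <= 1 ->
    (G (c1 * u + (1 - c1) * a) (c2 * u + (1 - c2) * b) <= M)%E.
  move=> hu ha bi; have [ui ai] := (bit01 _ hu, bit01 _ ha).
  apply: (@quasiconvex_le_comb M (1 - b) (c1 * u + (1 - c1) * a) (c2 * u + (1 - c2) * 0)
                               (c1 * u + (1 - c1) * a) (c2 * u + (1 - c2) * 1));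
    try solve [exact: onem01 | exact: convex_comb01 | ring].
  - by apply: at_vertex => //; left.
  - by apply: at_vertex => //; right.
have on_face u a b : u = 0 \/ u = 1 -> 0 <= a <= 1 -> 0 <= b <= 1 ->
    (G (c1 * u + (1 - c1) * a) (c2 * u + (1 - c2) * b) <= M)%E.
  move=> hu ai bi; have ui := bit01 _ hu.
  apply: (@quasiconvex_le_comb M (1 - a) (c1 * u + (1 - c1) * 0) (c2 * u + (1 - c2) * b)
                               (c1 * u + (1 - c1) * 1) (c2 * u + (1 - c2) * b));
    try solve [exact: onem01 | exact: convex_comb01 | ring].
  - by apply: on_edge => //; left.
  - by apply: on_edge => //; right.
move=> u a b ui ai bi.
apply: (@quasiconvex_le_comb M (1 - u) (c1 * 0 + (1 - c1) * a) (c2 * 0 + (1 - c2) * b)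
                              (c1 * 1 + (1 - c1) * a) (c2 * 1 + (1 - c2) * b));
  try solve [exact: onem01 | exact: convex_comb01 | ring].
- by apply: on_face => //; left.
- by apply: on_face => //; right.
Qed.

Lemma quasiconvex_vertex_le (c1 c2 a b : R) : 0 <= c1 <= 1 -> 0 <= c2 <= 1 ->
  a = 0 \/ a = 1 -> b = 0 \/ b = 1 ->
  (G ((1 - c1) * a) ((1 - c2) * b) <= maxe (G 0 (1 - c2)) (G (1 - c1) 0))%E.
Proof.
move=> c1i c2i ha hb; set M := maxe _ _.
have GA : (G 0 (1 - c2) <= M)%E by rewrite le_max lexx.
have GB : (G (1 - c1) 0 <= M)%E by rewrite le_max lexx orbT.
have i0 : 0 <= (0 : R) <= 1 by rewrite lexx ler01.
have i1 : 0 <= (1 : R) <= 1 by rewrite lexx ler01.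
have ih : 0 <= (1 / 2 : R) <= 1 by apply/andP; split; lra.
have c1'i := onem01 c1i; have c2'i := onem01 c2i.
(* the diagonal is reached as the midpoint of (0, 1 - c2) and its flip (1, c2) *)
have Gdiag_le s : 0 <= s <= 1 -> (G s s <= M)%E.
  move=> si; rewrite (G_diag si ih).
  apply: (quasiconvex_le_comb ih i0 c2'i i1 c2i _ _ GA); [by field | by field |].
  by rewrite -[G 1 c2]G_flip subrr.
have Gcorner : (G (1 - c1) (1 - c2) <= M)%E.
  have [->|c1n] := eqVneq c1 1; first by rewrite subrr.
  case/andP: (c1i) => c10 c11; case/andP: (c2i) => c20 c21.
  (* pass through (S, 1 - c2), between (1 - c1, 0) and the diagonal point (1, 1) *)
  set S := 1 - c1 * c2.
  have c1S : 1 - c1 <= S by rewrite /S; nra.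
  have Sp : 0 < S by apply: lt_le_trans c1S; rewrite subr_gt0 lt_neqAle c1n.
  have Si : 0 <= S <= 1 by apply/andP; split; rewrite /S; nra.
  have GS : (G S (1 - c2) <= M)%E.
    by apply: (quasiconvex_le_comb c2i c1'i i0 i1 i1 _ _ GB (Gdiag_le 1 i1)); rewrite /S; ring.
  have li : 0 <= 1 - (1 - c1) / S <= 1.
    have S0 := ltW Sp.
    by rewrite subr_ge0 ler_pdivrMr // mul1r c1S gerBl divr_ge0 // subr_ge0.
  apply: (quasiconvex_le_comb li i0 c2'i Si c2'i _ _ GA GS); last by ring.
  by field; rewrite gt_eqF.
case: ha => ->; case: hb => ->; rewrite ?mulr0 ?mulr1 //.
exact: Gdiag_le.
Qed.

Lemma quasiconvex_mixture_le (c1 c2 u a b : R) : 0 <= c1 <= 1 -> 0 <= c2 <= 1 ->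
  0 <= u <= 1 -> 0 <= a <= 1 -> 0 <= b <= 1 ->
  (G (c1 * u + (1 - c1) * a) (c2 * u + (1 - c2) * b) <=
   maxe (G 0 (1 - c2)) (G (1 - c1) 0))%E.
Proof. by move=> c1i c2i; apply: quasiconvex_cube_le => // a' b'; apply: quasiconvex_vertex_le. Qed.

End quasiconvex_unit_square.

Section binary_divergence.
Variable R : realType.

Definition fdiv (Phi : R -> R -> \bar R) (p q : bool -> R) : \bar R :=
  (\sum_(z : bool) Phi (p z) (q z))%E.

Lemma Hdiv_fdiv (al : R) (p q : bool -> R) : (Hdiv al p q)%:E = fdiv (Hterm al) p q.
Proof. by rewrite /Hdiv /fdiv -sumEFin. Qed.

Lemma eq_fdiv (Phi : R -> R -> \bar R) (p p' q q' : bool -> R) :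
  p =1 p' -> q =1 q' -> fdiv Phi p q = fdiv Phi p' q'.
Proof. by move=> ep eq; apply: eq_bigr => z _; rewrite ep eq. Qed.

Lemma bmixE (w a b : R) : bmix w a b =1 Bern ((1 - w) * a + w * b).
Proof. by case; rewrite /bmix /Bern /=; ring. Qed.

(* Probability that B outputs 1 when h vanishes on the batch with probability s. *)
Definition rr_param (th s : R) : R := (1 - s) * th + s * (1 - th).

Lemma rr_param01 (th s : R) : 0 <= th <= 1 -> 0 <= s <= 1 -> 0 <= rr_param th s <= 1.
Proof. by move=> /andP[? ?] /andP[? ?]; apply/andP; split; rewrite /rr_param; nra. Qed.

Definition diag_homogeneous01 (Phi : R -> R -> \bar R) :=
  forall p : R, 0 <= p <= 1 -> (Phi p p = p%:E * Phi 1%R 1%R)%E.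

Definition coin_div (Phi : R -> R -> \bar R) (th s t : R) : \bar R :=
  fdiv Phi (Bern (rr_param th s)) (Bern (rr_param th t)).

Definition convex01 (Phi : R -> R -> \bar R) := forall l p0 q0 p1 q1 : R,
  0 <= l <= 1 -> 0 <= p0 <= 1 -> 0 <= q0 <= 1 -> 0 <= p1 <= 1 -> 0 <= q1 <= 1 ->
  (Phi (l * p0 + (1 - l) * p1)%R (l * q0 + (1 - l) * q1)%R <=
   l%:E * Phi p0 q0 + (1 - l)%:E * Phi p1 q1)%E.

Lemma convex_comb_le_maxe (l : R) (x y : \bar R) : 0 <= l <= 1 ->
  (0 <= x)%E -> (0 <= y)%E -> (l%:E * x + (1 - l)%:E * y <= maxe x y)%E.
Proof.
move=> /andP[l0 l1] x0 y0.
have M0 : (0 <= maxe x y)%E by rewrite le_max x0.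
apply: (@le_trans _ _ (l%:E * maxe x y + (1 - l)%:E * maxe x y)%E).
  by apply: leeD; apply: lee_wpmul2l; rewrite ?lee_fin ?subr_ge0 ?le_max ?lexx ?orbT.
by rewrite -ge0_muleDl ?lee_fin ?subr_ge0 // -EFinD addrC subrK mul1e.
Qed.

Lemma coin_div_quasiconvex (Phi : R -> R -> \bar R) (th : R) : 0 <= th <= 1 ->
  convex01 Phi -> (forall p q, 0 <= Phi p q)%E -> quasiconvex01 (coin_div Phi th).
Proof.
move=> thi Phi_cvx Phi_ge0 l s0 t0 s1 t1 li s0i t0i s1i t1i.
have cd_ge0 s t : (0 <= coin_div Phi th s t)%E by apply: sume_ge0.
apply: le_trans _ (convex_comb_le_maxe li (cd_ge0 _ _) (cd_ge0 _ _)).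
have rr_comb s s' : rr_param th (l * s + (1 - l) * s') =
  l * rr_param th s + (1 - l) * rr_param th s' by rewrite /rr_param; ring.
have rr_combC s s' : 1 - rr_param th (l * s + (1 - l) * s') =
  l * (1 - rr_param th s) + (1 - l) * (1 - rr_param th s') by rewrite /rr_param; ring.
have p0i := rr_param01 thi s0i; have q0i := rr_param01 thi t0i.
have p1i := rr_param01 thi s1i; have q1i := rr_param01 thi t1i.
rewrite /coin_div /fdiv !big_bool /Bern /= !rr_combC !rr_comb.
apply: le_trans (leeD (Phi_cvx _ _ _ _ _ li p0i q0i p1i q1i)
                      (Phi_cvx _ _ _ _ _ li (onem01 p0i) (onem01 q0i) (onem01 p1i) (onem01 q1i))) _.
case/andP: li => l0 l1.
by rewrite addeACA -!ge0_muleDr ?Phi_ge0.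
Qed.

Lemma coin_div_flip (Phi : R -> R -> \bar R) (th s t : R) :
  coin_div Phi th (1 - s) (1 - t) = coin_div Phi th s t.
Proof.
have rrC v : rr_param th (1 - v) = 1 - rr_param th v by rewrite /rr_param; ring.
by rewrite /coin_div /fdiv !big_bool /Bern /= !rrC !subKr addeC.
Qed.

Lemma coin_div_diag (Phi : R -> R -> \bar R) (th s : R) :
  diag_homogeneous01 Phi ->
  0 <= th <= 1 -> 0 <= s <= 1 -> coin_div Phi th s s = Phi 1 1.
Proof.
move=> Phi_diag thi si; have /andP[p0 p1] := rr_param01 thi si.
rewrite /coin_div /fdiv big_bool /Bern /=.
rewrite (Phi_diag _ (rr_param01 thi si)) (Phi_diag _ (onem01 (rr_param01 thi si))).
by rewrite -ge0_muleDl ?lee_fin ?subr_ge0 // -EFinD addrC subrK mul1e.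
Qed.

Lemma coin_div_mixture_le (Phi : R -> R -> \bar R) (th c1 c2 u a b : R) :
  convex01 Phi -> (forall p q, 0 <= Phi p q)%E ->
  diag_homogeneous01 Phi ->
  0 <= th <= 1 -> 0 <= c1 <= 1 -> 0 <= c2 <= 1 ->
  0 <= u <= 1 -> 0 <= a <= 1 -> 0 <= b <= 1 ->
  (coin_div Phi th (c1 * u + (1 - c1) * a) (c2 * u + (1 - c2) * b) <=
   maxe (coin_div Phi th 0 (1 - c2)) (coin_div Phi th (1 - c1) 0))%E.
Proof.
move=> Phi_cvx Phi_ge0 Phi_diag thi.
apply: quasiconvex_mixture_le; first exact: coin_div_quasiconvex.
- exact: coin_div_flip.
- by move=> s s' si s'i; rewrite !coin_div_diag.
Qed.

End binary_divergence.

Lemma mixture_decomposition (R : realType) (c u s : R) : 0 <= c <= 1 -> 0 <= u <= 1 ->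
  c * u <= s -> c * (1 - u) <= 1 - s ->
  exists2 a, 0 <= a <= 1 & s = c * u + (1 - c) * a.
Proof.
move=> /andP[c0 c1] /andP[u0 u1] lo hi.
have [c_1|cn] := eqVneq c 1.
  exists 0; first by rewrite lexx ler01.
  by move: lo hi; rewrite c_1 !mul1r; lra.
have cp : 0 < 1 - c by rewrite subr_gt0 lt_neqAle cn.
exists ((s - c * u) / (1 - c)); last by field; rewrite gt_eqF.
by rewrite divr_ge0 ?subr_ge0 ?ler_pdivrMr ?mul1r ?(ltW cp) //=; lra.
Qed.

Section poisson_subsampling.
Variables (R : realType) (A : finType) (r : R).
Hypothesis r01 : 0 <= r <= 1.

Lemma poisson_sub_ge0 (X y : {set A}) : 0 <= poisson_sub r X y.
Proof.
case/andP: r01 => r0 r1; rewrite /poisson_sub; case: ifP => // _.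
by rewrite mulr_ge0 // exprn_ge0 // subr_ge0.
Qed.

(* group the subsets of X by cardinality: the binomial theorem for (r + (1 - r))^|X| *)
Lemma poisson_sub_sum (X : {set A}) : \sum_(y : {set A}) poisson_sub r X y = 1.
Proof.
rewrite /poisson_sub -big_mkcond /=.
rewrite (partition_big (fun y : {set A} => (inord #|y| : 'I_(#|X|).+1)) xpredT) //=.
transitivity (\sum_(j < #|X|.+1) ((1 - r) ^+ (#|X| - j) * r ^+ j) *+ 'C(#|X|, j)).
  apply: eq_bigr => j _.
  transitivity (\sum_(y in [set y : {set A} | (y \subset X) & #|y| == j])
      r ^+ j * (1 - r) ^+ (#|X| - j)).
    apply: eq_big => y; rewrite ?inE.
      case sub: (y \subset X) => //=.
      by rewrite -val_eqE /= inordK // ltnS subset_leq_card.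
    by move=> /andP[sub /eqP <-]; rewrite inordK // ltnS subset_leq_card.
  by rewrite sumr_const cards_draws mulrC.
by rewrite -exprDn subrK expr1n.
Qed.

Definition sub_prob (P : pred {set A}) (X : {set A}) : R :=
  \sum_(y | P y) poisson_sub r X y.

Lemma sub_probC (P : pred {set A}) (X : {set A}) :
  sub_prob (predC P) X = 1 - sub_prob P X.
Proof. by rewrite -(poisson_sub_sum X) (bigID P) /= addrC addrK. Qed.

Lemma sub_prob01 (P : pred {set A}) (X : {set A}) : 0 <= sub_prob P X <= 1.
Proof.
have ge0 Q : 0 <= sub_prob Q X by apply: sumr_ge0 => y _; apply: poisson_sub_ge0.
by rewrite ge0 -subr_ge0 -sub_probC ge0.
Qed.

(* A batch of X is a batch of X :|: G avoiding G, with its weight multiplied by (1 - r)^|G|. *)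
Lemma sub_prob_setU_ge (P : pred {set A}) (X G : {set A}) : X :&: G = set0 ->
  (1 - r) ^+ #|G| * sub_prob P X <= sub_prob P (X :|: G).
Proof.
move=> XG0; rewrite /sub_prob mulr_sumr; apply: ler_sum => y _.
have [yX|yXn] := boolP (y \subset X); last first.
  by rewrite {1}/poisson_sub (negbTE yXn) mulr0 poisson_sub_ge0.
have yXG : y \subset X :|: G by rewrite (subset_trans yX) // subsetUl.
rewrite /poisson_sub yX yXG cardsU XG0 cards0 subn0.
have le_yX : (#|y| <= #|X|)%N := subset_leq_card yX.
by rewrite [(#|X| + #|G|)%N]addnC -addnBA // exprD mulrCA.
Qed.

Lemma sub_prob_setU_mixture (P : pred {set A}) (X G : {set A}) : X :&: G = set0 ->
  exists2 a, 0 <= a <= 1 &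
  sub_prob P (X :|: G) = (1 - r) ^+ #|G| * sub_prob P X + (1 - (1 - r) ^+ #|G|) * a.
Proof.
move=> XG0; apply: mixture_decomposition; rewrite ?sub_prob01 //.
- by case/andP: r01 => r0 r1; rewrite exprn_ge0 ?exprn_ile1 ?subr_ge0 //=; lra.
- exact: sub_prob_setU_ge.
- by rewrite -!sub_probC; apply: sub_prob_setU_ge.
Qed.

End poisson_subsampling.

Lemma subsampled_pmfE (R : realType) (A : finType) (h : {set A} -> bool)
    (th r : R) (X : {set A}) : 0 <= r <= 1 ->
  subsampled_pmf h th r X =1 Bern (rr_param th (sub_prob r (predC h) X)).
Proof.
move=> r01 z; rewrite /subsampled_pmf (bigID h) /=.
have -> : \sum_(y | h y) rr_pmf th (h y) z * poisson_sub r X y =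
          rr_pmf th true z * sub_prob r h X.
  by rewrite mulr_sumr; apply: eq_bigr => y ->.
have -> : \sum_(y | ~~ h y) rr_pmf th (h y) z * poisson_sub r X y =
          rr_pmf th false z * sub_prob r (predC h) X.
  by rewrite mulr_sumr; apply: eq_bigr => y /negbTE ->.
have -> : sub_prob r h X = 1 - sub_prob r (predC h) X by rewrite sub_probC subKr.
by case: z; rewrite /rr_pmf /Bern /rr_param /=; ring.
Qed.

Lemma subsampled_fdiv_le (R : realType) (A : finType) (Phi : R -> R -> \bar R)
    (h : {set A} -> bool) (th r : R) (x0 gm gp : {set A}) :
  convex01 Phi -> (forall p q, 0 <= Phi p q)%E ->
  diag_homogeneous01 Phi ->
  0 <= th <= 1 -> 0 <= r <= 1 -> x0 :&: gm = set0 -> x0 :&: gp = set0 ->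
  (fdiv Phi (subsampled_pmf h th r (x0 :|: gm)) (subsampled_pmf h th r (x0 :|: gp)) <=
   maxe (fdiv Phi (bmix (1 - (1 - r) ^+ #|gm|) th th)
                  (bmix (1 - (1 - r) ^+ #|gp|) th (1 - th)))
        (fdiv Phi (bmix (1 - (1 - r) ^+ #|gm|) th (1 - th))
                  (bmix (1 - (1 - r) ^+ #|gp|) th (1 - (1 - th)))))%E.
Proof.
move=> Phi_cvx Phi_ge0 Phi_diag thi r01 gm0 gp0.
have c01 (G : {set A}) : 0 <= (1 - r) ^+ #|G| <= 1.
  by case/andP: r01 => r0 r1; rewrite exprn_ge0 ?exprn_ile1 ?subr_ge0 ?gerBl.
rewrite !(eq_fdiv _ (subsampled_pmfE _ _ _ r01) (subsampled_pmfE _ _ _ r01)).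
have [a ai ->] := sub_prob_setU_mixture r01 (predC h) gm0.
have [b bi ->] := sub_prob_setU_mixture r01 (predC h) gp0.
have bmix_th w : bmix w th th =1 Bern (rr_param th 0).
  by move=> z; rewrite bmixE /rr_param; congr Bern; ring.
have bmix_thC w : bmix w th (1 - (1 - th)) =1 Bern (rr_param th 0).
  by move=> z; rewrite bmixE /rr_param; congr Bern; ring.
rewrite !(eq_fdiv _ (bmix_th _) (bmixE _ _ _)) !(eq_fdiv _ (bmixE _ _ _) (bmix_thC _)).
by apply: coin_div_mixture_le; rewrite ?c01 ?sub_prob01.
Qed.

Theorem mainTheorem8 (R : realType) (A : finType) (h : {set A} -> bool)
    (theta r : R) (Kp Km : nat) (x x' : {set A}) :
  0 <= theta <= 1 -> 0 <= r <= 1 -> neighbor Kp Km x x' ->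
  let w1 := 1 - (1 - r) ^+ Km in
  let w2 := 1 - (1 - r) ^+ Kp in
  let mx := subsampled_pmf h theta r x in
  let mx' := subsampled_pmf h theta r x' in
  (forall alpha : R, 0 <= alpha ->
     Hdiv alpha mx mx' <=
     Num.max (Hdiv alpha (bmix w1 theta theta) (bmix w2 theta (1 - theta)))
             (Hdiv alpha (bmix w1 theta (1 - theta)) (bmix w2 theta (1 - (1 - theta)))))
  /\
  (forall alpha : R, 1 < alpha ->
     (Ldiv alpha mx mx' <=
      maxe (Ldiv alpha (bmix w1 theta theta) (bmix w2 theta (1 - theta)))
           (Ldiv alpha (bmix w1 theta (1 - theta)) (bmix w2 theta (1 - (1 - theta)))))%E).
Proof.
move=> thi r01 [gm [gp [gm_x <- gp_x <- ->]]] w1 w2 mx mx'.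
have x_eq : x = (x :\: gm) :|: gm by rewrite setUC -{1}(setID x gm) (setIidPr gm_x).
have gm0 : (x :\: gm) :&: gm = set0 by rewrite setIDAC setDIl setDv setI0.
have gp0 : (x :\: gm) :&: gp = set0 by rewrite setIDAC setIC gp_x set0D.
rewrite /mx /mx' /w1 /w2 [in subsampled_pmf _ _ _ x]x_eq; split=> al al_gt.
- rewrite -lee_fin EFin_max !Hdiv_fdiv.
  apply: (subsampled_fdiv_le h _ _ _ thi r01 gm0 gp0).
  + by move=> l p0 q0 p1 q1 li _ _ _ _; apply: Hterm_convex.
  + exact: Hterm_ge0.
  + by move=> p /andP[p0 _]; apply: Hterm_diag.
- apply: (subsampled_fdiv_le h _ _ _ thi r01 gm0 gp0).
  + move=> l p0 q0 p1 q1 li /andP[? _] /andP[? _] /andP[? _] /andP[? _].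
    exact: Lterm_convex.
  + exact: Lterm_ge0.
  + by move=> p /andP[p0 _]; apply: Lterm_diag.
Qed.
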